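(* For every integer $k\ge 1$, the triangulane $T_k$ satisfies $$SO(T_k)=\big(36(2^{k-1}-1)+6\cdot 2^{k-1}+12\big)\sqrt{2}+6\cdot 2^k\sqrt{5}.$$
   Context: For a finite simple graph $G$, $SO(G)=\sum_{uv\in E(G)}\sqrt{d_u^2+d_v^2}$, where $d_u$ is the degree of $u$ in $G$ (the Sombor index). The circuit of pairwise disjoint graphs $H_1,H_2,H_3$ with respect to vertices $z_i\in V(H_i)$ is obtained from their disjoint union and a triangle $C_3$ with vertices $c_1,c_2,c_3$ by identifying $z_i$ with $c_i$ for each $i$. Define rooted graphs $G_k$ recursively: $G_1$ is a triangle with a distinguished vertex $y_1$; for $k\ge 2$, $G_k$ is the circuit of two disjoint copies of $G_{k-1}$ (with respect to their vertices $y_{k-1}$) and $K_1$ (with respect to its single vertex), and $y_k$ is the vertex where $K_1$ was placed. The triangulane $T_k$ is the circuit of three disjoint copies of $G_k$ with respect to their vertices $y_k$. *)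

From HB Require Import structures.
From mathcomp Require Import all_boot all_order all_algebra.
Set Implicit Arguments. Unset Strict Implicit. Unset Printing Implicit Defensive.
Import Order.TTheory GRing.Theory Num.Theory.

(* A finite simple graph: a finite vertex type with an adjacency relation
   (the constructions below only produce symmetric irreflexive relations). *)
Record graph := Graph { vert : finType; adj : rel vert }.

Record rgraph := RGraph { rg : graph; root : vert rg }.

Definition deg (G : graph) (u : vert G) : nat := #|[set v | adj u v]|.

Definition edges (G : graph) : {set {set vert G}} :=
  [set [set u; v] | u in vert G, v in vert G & adj u v].

Local Open Scope ring_scope.

Definition sombor (R : rcfType) (G : graph) : R :=
  \sum_(e in edges G) Num.sqrt (\sum_(x in e) ((deg x)%:R ^+ 2)).

Local Close Scope ring_scope.

(* The circuit of H1, H2, H3 w.r.t. z1, z2, z3: the disjoint union of the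
   H_i together with a triangle c1 c2 c3 where c_i is identified with z_i,
   i.e. the disjoint union plus the three edges z1z2, z2z3, z1z3. *)
Definition circuit (H1 H2 H3 : graph) (z1 : vert H1) (z2 : vert H2)
    (z3 : vert H3) : graph :=
  let V := ((vert H1 + vert H2) + vert H3)%type in
  let c : seq V := [:: inl (inl z1); inl (inr z2); inr z3] in
  @Graph V (fun x y =>
    match x, y with
    | inl (inl a), inl (inl b) => adj a b
    | inl (inr a), inl (inr b) => adj a b
    | inr a, inr b => adj a b
    | _, _ => false
    end || [&& x != y, x \in c & y \in c]).

Definition triangle : graph := @Graph 'I_3 (fun u v => u != v).
Definition K1 : graph := @Graph unit (fun _ _ => false).

(* G k for k >= 1 (G 0 is an unused junk value equal to G 1). *)
Fixpoint Gk (k : nat) : rgraph :=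
  match k with
  | 0 => @RGraph triangle ord0
  | S k' =>
      match k' with
      | 0 => @RGraph triangle ord0
      | _ => let H := Gk k' in
             @RGraph (circuit (root H) (root H) (tt : vert K1))
                     (inr tt)
      end
  end.

Definition Tk (k : nat) : graph :=
  let H := Gk k in circuit (root H) (root H) (root H).

From mathcomp Require Import all_boot all_order all_algebra ring.
Import Order.TTheory GRing.Theory Num.Theory.
Set Implicit Arguments. Unset Strict Implicit. Unset Printing Implicit Defensive.

(* Twice the Sombor index is the sum of sqrt (d_u^2 + d_v^2) over the arcs
   (ordered adjacent pairs) of the graph.  The arcs of a circuit are those of
   its three parts, where only the three attachment vertices change degree
   (by 2), plus the six arcs of the triangle.  Let g_k be the contribution of
   the arcs of G_k once its root has degree 4.  As the roots of all G_k have
   degree 2, every triangle edge of G_(k+1) and of T_k joins two vertices of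
   degree 4, so g_(k+1) = 2 g_k + 24 sqrt 2 with g_1 = 8 sqrt 5 + 4 sqrt 2, and
   2 SO(T_k) = 3 g_k + 24 sqrt 2. *)

Definition clique (T : eqType) (s : seq T) : rel T :=
  fun x y => [&& x != y, x \in s & y \in s].

Definition sum_rel (A B : Type) (e1 : rel A) (e2 : rel B) : rel (A + B) :=
  fun x y => match x, y with
             | inl a, inl b => e1 a b
             | inr a, inr b => e2 a b
             | _, _ => false
             end.

Lemma clique_sym (T : eqType) (s : seq T) : symmetric (clique s).
Proof. by move=> x y; rewrite /clique eq_sym andbCA andbC -andbA. Qed.

Lemma clique_irr (T : eqType) (s : seq T) : irreflexive (clique s).
Proof. by move=> x; rewrite /clique eqxx. Qed.

Lemma sum_rel_sym (A B : Type) (e1 : rel A) (e2 : rel B) :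
  symmetric e1 -> symmetric e2 -> symmetric (sum_rel e1 e2).
Proof. by move=> s1 s2 [a|a] [b|b] //=. Qed.

Lemma sum_rel_irr (A B : Type) (e1 : rel A) (e2 : rel B) :
  irreflexive e1 -> irreflexive e2 -> irreflexive (sum_rel e1 e2).
Proof. by move=> i1 i2 [a|a] /=. Qed.

Section ArcSum.
Variable R : nmodType.
Local Open Scope ring_scope.

Definition arc_sum (T : finType) (e : rel T) (f : T -> T -> R) : R :=
  \sum_x \sum_y (if e x y then f x y else 0).

Lemma eq_arc_sum_rel (T : finType) (e1 e2 : rel T) f :
  e1 =2 e2 -> arc_sum e1 f = arc_sum e2 f.
Proof. by move=> e12; apply: eq_bigr => x _; apply: eq_bigr => y _; rewrite e12. Qed.

Lemma eq_arc_sum (T : finType) (e : rel T) (f1 f2 : T -> T -> R) :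
  (forall x y, e x y -> f1 x y = f2 x y) -> arc_sum e f1 = arc_sum e f2.
Proof.
move=> ef; apply: eq_bigr => x _; apply: eq_bigr => y _.
by case: ifP => // /ef ->.
Qed.

Lemma arc_sum_orb (T : finType) (e1 e2 : rel T) f :
  (forall x y, e2 x y -> e1 x y = false) ->
  arc_sum (fun x y => e1 x y || e2 x y) f = arc_sum e1 f + arc_sum e2 f.
Proof.
move=> dis; rewrite /arc_sum -big_split; apply: eq_bigr => x _.
rewrite -big_split; apply: eq_bigr => y _.
case E2: (e2 x y) => /=; last by rewrite orbF addr0.
by rewrite (dis _ _ E2) add0r.
Qed.

Lemma arc_sum_sum_rel (A B : finType) (e1 : rel A) (e2 : rel B) f :
  arc_sum (sum_rel e1 e2) f =
  arc_sum e1 (fun a b => f (inl a) (inl b)) + arc_sum e2 (fun a b => f (inr a) (inr b)).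
Proof.
rewrite /arc_sum big_sumType; congr (_ + _); apply: eq_bigr => x _;
  by rewrite big_sumType /= big1_eq ?addr0 ?add0r.
Qed.

Lemma sum_mem_uniq (T : finType) (s : seq T) (F : T -> R) :
  uniq s -> \sum_x (if x \in s then F x else 0) = \sum_(x <- s) F x.
Proof. by move=> us; rewrite -big_mkcond big_uniq. Qed.

Lemma arc_sum_clique (T : finType) (s : seq T) f : uniq s ->
  arc_sum (clique s) f = \sum_(x <- s) \sum_(y <- s) (if x != y then f x y else 0).
Proof.
move=> us; rewrite /arc_sum -[RHS]sum_mem_uniq //; apply: eq_bigr => x _.
rewrite /clique; case: (x \in s); last by rewrite big1 // => y; rewrite andbF.
by rewrite -[RHS]sum_mem_uniq //; apply: eq_bigr => y _; case: (x != y); case: (y \in s).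
Qed.

Lemma arc_sum_clique3 (T : finType) (a b c : T) f : uniq [:: a; b; c] ->
  arc_sum (clique [:: a; b; c]) f =
  f a b + f a c + (f b a + f b c) + (f c a + f c b).
Proof.
move=> us; rewrite arc_sum_clique //.
move: us; rewrite /= !inE negb_or => /and3P[/andP[ab ac] bc _].
rewrite !big_cons !big_nil !eqxx ab ac bc eq_sym ab eq_sym ac eq_sym bc /=.
by rewrite !addr0 !add0r !addrA.
Qed.

End ArcSum.

Lemma deg_sum (G : graph) (u : vert G) : deg u = \sum_v (adj u v : nat).
Proof.
rewrite /deg -sum1_card big_mkcond /=; apply: eq_bigr => v _; rewrite inE.
by case: adj.
Qed.

Lemma sum_clique (T : finType) (s : seq T) x : uniq s ->
  \sum_y (clique s x y : nat) = (x \in s) * (size s).-1.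
Proof.
move=> us; rewrite /clique; case xs: (x \in s) => /=; last by rewrite big1 // => y; rewrite andbF.
rewrite mul1n -(size_rem xs) (rem_filter _ us) size_filter -sum1_count.
rewrite [RHS]big_mkcond [RHS]big_uniq // [RHS]big_mkcond /=; apply: eq_bigr => y _.
by rewrite eq_sym; case: (y \in s); case: (y != x).
Qed.

Definition simple_graph (G : graph) := symmetric (@adj G) /\ irreflexive (@adj G).

Lemma set2_eqE (T : finType) (u v u0 v0 : T) : u0 != v0 ->
  ([set u; v] == [set u0; v0]) = ((u, v) == (u0, v0)) || ((u, v) == (v0, u0)).
Proof.
move=> ne; apply/eqP/idP => [E|/orP[]/eqP[-> ->] //]; last exact: setUC.
move: (set21 u0 v0) (set22 u0 v0); rewrite -E => /set2P[] e1 /set2P[] e2;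
  by subst u0 v0; rewrite ?eqxx ?orbT in ne *.
Qed.

Lemma card_arcs_of_edge (G : graph) (u0 v0 : vert G) :
  simple_graph G -> adj u0 v0 ->
  #|[pred p | adj p.1 p.2 && ([set p.1; p.2] == [set u0; v0])]| = 2.
Proof.
move=> [sym irr] uv0; have ne : u0 != v0 by apply: contraTneq uv0 => ->; rewrite irr.
have ne2 : (u0, v0) != (v0, u0) by apply: contra ne => /eqP[->].
have <- : #|[set (u0, v0); (v0, u0)]| = 2 by rewrite cards2 ne2.
apply: eq_card => -[u v]; rewrite !inE set2_eqE //=.
by apply/andP/idP => [[]//|/orP[]/eqP[-> ->]]; rewrite ?eqxx ?orbT; split; rewrite // sym.
Qed.

Section Sombor.
Variable R : rcfType.
Local Open Scope ring_scope.

Definition sombor_term (m n : nat) : R := Num.sqrt (m%:R ^+ 2 + n%:R ^+ 2).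

Definition sombor_arcs (G : graph) (w : vert G -> nat) : R :=
  arc_sum (@adj G) (fun u v => sombor_term (w u) (w v)).

Lemma eq_sombor_arcs (G : graph) (w1 w2 : vert G -> nat) :
  w1 =1 w2 -> sombor_arcs w1 = sombor_arcs w2.
Proof. by move=> w12; apply: eq_arc_sum => u v _; rewrite !w12. Qed.

Lemma sombor_termC m n : sombor_term m n = sombor_term n m.
Proof. by rewrite /sombor_term addrC. Qed.

Lemma sombor_term_sq (a b c d : nat) : (a ^ 2 + b ^ 2 = c ^ 2 * d)%N ->
  sombor_term a b = c%:R * Num.sqrt d%:R.
Proof.
move=> e; rewrite /sombor_term -!natrX -natrD e natrM natrX.
by rewrite sqrtrM ?sqr_ge0 // sqrtr_sqr ger0_norm.
Qed.

Lemma sombor_arcsE (G : graph) : simple_graph G -> sombor R G *+ 2 = sombor_arcs (@deg G).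
Proof.
move=> [sym irr]; pose g (e : {set vert G}) := Num.sqrt (\sum_(x in e) ((deg x)%:R ^+ 2 : R)).
have arcE u v : adj u v -> sombor_term (deg u) (deg v) = g [set u; v].
  move=> uv; rewrite /g big_setU1 ?big_set1 // inE.
  by apply: contraTneq uv => ->; rewrite irr.
rewrite /sombor_arcs /arc_sum; under eq_bigr do rewrite -big_mkcond.
rewrite pair_big_dep /= (eq_bigr (fun p => g [set p.1; p.2])) => [|[u v] /arcE //].
rewrite (partition_big (fun p => [set p.1; p.2]) (mem (edges G))) /=; last first.
  by move=> [u v] /= uv; apply/imset2P; exists u v; rewrite ?inE.
rewrite /sombor -sumrMnl; apply: eq_bigr => e /imset2P[u0 v0 _]; rewrite inE /= => uv0 ->.
rewrite [RHS](eq_bigr (fun _ => g [set u0; v0])) => [|p /andP[_ /eqP ->] //].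
by rewrite sumr_const (card_arcs_of_edge (conj sym irr) uv0).
Qed.
End Sombor.

(* The degree of [a] once [H] is attached to a circuit by its root. *)
Definition glue_deg (H : rgraph) (a : vert (rg H)) : nat := deg a + 2 * (a == root H).

Definition sombor_glued (R : rcfType) (H : rgraph) : R := sombor_arcs R (glue_deg (H:=H)).

Lemma glue_deg_root (H : rgraph) : glue_deg (root H) = (deg (root H) + 2)%N.
Proof. by rewrite /glue_deg eqxx. Qed.

Section Circuit.
Variables H1 H2 H3 : rgraph.
Local Notation C := (circuit (root H1) (root H2) (root H3)).
Local Notation tri := ([:: inl (inl (root H1)); inl (inr (root H2)); inr (root H3)] : seq (vert C)).
Local Notation inner := (sum_rel (sum_rel (@adj (rg H1)) (@adj (rg H2))) (@adj (rg H3))).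

Lemma circuit_adjE : @adj C =2 (fun x y => inner x y || clique tri x y).
Proof. by case=> [[a|a]|a] [[b|b]|b]. Qed.

Lemma uniq_tri : uniq tri.
Proof. by []. Qed.

Lemma inner_clique_tri x y : clique tri x y -> inner x y = false.
Proof.
rewrite /clique !inE => /and3P[nxy /or3P[]/eqP ex /or3P[]/eqP ey];
  by subst x y; rewrite ?eqxx in nxy.
Qed.

Lemma circuit_simple :
  simple_graph (rg H1) -> simple_graph (rg H2) -> simple_graph (rg H3) -> simple_graph C.
Proof.
move=> [s1 i1] [s2 i2] [s3 i3]; split=> [x y|x]; rewrite !circuit_adjE.
  by rewrite (sum_rel_sym (sum_rel_sym s1 s2) s3) clique_sym.
by rewrite (sum_rel_irr (sum_rel_irr i1 i2) i3) clique_irr.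
Qed.

Lemma deg_circuit (x : vert C) : deg x = (\sum_y (inner x y : nat) + (x \in tri) * 2)%N.
Proof.
rewrite deg_sum -[_ * 2]/((x \in tri) * (size tri).-1)%N -sum_clique ?uniq_tri //.
rewrite -big_split; apply: eq_bigr => y _; rewrite circuit_adjE.
case Exy: (clique tri x y) => /=; last by rewrite orbF addn0.
by rewrite (inner_clique_tri Exy).
Qed.

Lemma mem_tri1 a : (inl (inl a) \in tri) = (a == root H1).
Proof. by apply/idP/eqP => [|->]; rewrite !inE ?eqxx // => /or3P[/eqP[->]|/eqP|/eqP]. Qed.

Lemma mem_tri2 a : (inl (inr a) \in tri) = (a == root H2).
Proof. by apply/idP/eqP => [|->]; rewrite !inE ?eqxx ?orbT // => /or3P[/eqP|/eqP[->]|/eqP]. Qed.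

Lemma mem_tri3 a : (inr a \in tri) = (a == root H3).
Proof. by apply/idP/eqP => [|->]; rewrite !inE ?eqxx ?orbT // => /or3P[/eqP|/eqP|/eqP[->]]. Qed.

Lemma deg_circuit1 a : deg (inl (inl a) : vert C) = glue_deg a.
Proof. by rewrite deg_circuit mem_tri1 /glue_deg deg_sum mulnC !big_sumType /= !big1_eq ?addn0. Qed.

Lemma deg_circuit2 a : deg (inl (inr a) : vert C) = glue_deg a.
Proof. by rewrite deg_circuit mem_tri2 /glue_deg deg_sum mulnC !big_sumType /= !big1_eq ?addn0. Qed.

Lemma deg_circuit3 a : deg (inr a : vert C) = glue_deg a.
Proof. by rewrite deg_circuit mem_tri3 /glue_deg deg_sum mulnC !big_sumType /= !big1_eq ?addn0. Qed.

Local Notation Cr := (@RGraph C (inr (root H3))).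

Lemma glue_deg_circuit1 a : @glue_deg Cr (inl (inl a)) = glue_deg a.
Proof. by rewrite /glue_deg deg_circuit1 -[_ == inr _]/false muln0 addn0. Qed.

Lemma glue_deg_circuit2 a : @glue_deg Cr (inl (inr a)) = glue_deg a.
Proof. by rewrite /glue_deg deg_circuit2 -[_ == inr _]/false muln0 addn0. Qed.

Lemma glue_deg_circuit3 a : @glue_deg Cr (inr a) = (glue_deg a + 2 * (a == root H3))%N.
Proof. by rewrite /glue_deg deg_circuit3 (inj_eq inr_inj). Qed.

Variable R : rcfType.
Local Open Scope ring_scope.

Lemma sombor_arcs_circuit (w : vert C -> nat) :
  sombor_arcs R w =
    sombor_arcs R (fun a => w (inl (inl a))) + sombor_arcs R (fun a => w (inl (inr a)))
    + sombor_arcs R (fun a => w (inr a))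
    + (sombor_term R (w (inl (inl (root H1)))) (w (inl (inr (root H2))))
       + sombor_term R (w (inl (inl (root H1)))) (w (inr (root H3)))
       + sombor_term R (w (inl (inr (root H2)))) (w (inr (root H3)))) *+ 2.
Proof.
rewrite /sombor_arcs (eq_arc_sum_rel _ circuit_adjE) arc_sum_orb; last exact: inner_clique_tri.
rewrite !arc_sum_sum_rel arc_sum_clique3 ?uniq_tri //.
rewrite (sombor_termC R (w (inl (inr _)))) (sombor_termC R (w (inr _)) (w (inl (inl _)))).
by rewrite (sombor_termC R (w (inr _))); ring.
Qed.

Lemma sombor_circuit :
  simple_graph (rg H1) -> simple_graph (rg H2) -> simple_graph (rg H3) ->
  sombor R C *+ 2 =
    sombor_glued R H1 + sombor_glued R H2 + sombor_glued R H3
    + (sombor_term R (deg (root H1) + 2) (deg (root H2) + 2)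
       + sombor_term R (deg (root H1) + 2) (deg (root H3) + 2)
       + sombor_term R (deg (root H2) + 2) (deg (root H3) + 2)) *+ 2.
Proof.
move=> s1 s2 s3; rewrite (sombor_arcsE _ (circuit_simple s1 s2 s3)) sombor_arcs_circuit.
rewrite (eq_sombor_arcs R deg_circuit1) (eq_sombor_arcs R deg_circuit2) (eq_sombor_arcs R deg_circuit3).
by rewrite deg_circuit1 deg_circuit2 deg_circuit3 /glue_deg !eqxx.
Qed.
End Circuit.

Definition rooted_K1 : rgraph := @RGraph K1 tt.

Lemma GkSS k :
  Gk k.+2 = @RGraph (circuit (root (Gk k.+1)) (root (Gk k.+1)) (root rooted_K1)) (inr (root rooted_K1)).
Proof. by []. Qed.

Lemma simple_triangle : simple_graph triangle.
Proof. by split=> [u v|u]; rewrite /= ?eqxx // eq_sym. Qed.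

Lemma deg_triangle (u : 'I_3) : @deg triangle u = 2.
Proof. by case: u => [[|[|[|//]]] ?]; rewrite deg_sum !big_ord_recl big_ord0. Qed.

Lemma deg_K1 (u : vert K1) : deg u = 0.
Proof. by rewrite deg_sum big1. Qed.

Lemma simple_Gk k : simple_graph (rg (Gk k)).
Proof.
elim: k => [|[|k] IH]; try exact: simple_triangle.
by rewrite GkSS; apply: circuit_simple.
Qed.

Lemma deg_root_Gk k : deg (root (Gk k)) = 2.
Proof.
case: k => [|[|k]]; try exact: deg_triangle.
by rewrite GkSS deg_circuit3 glue_deg_root deg_K1.
Qed.

Section GkSombor.
Variable R : rcfType.
Local Open Scope ring_scope.

Lemma sombor_arcs_K1 (w : vert K1 -> nat) : sombor_arcs R w = 0.
Proof. by rewrite /sombor_arcs /arc_sum big1 // => u _; rewrite big1. Qed.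

Lemma sombor_glued_GkSS k :
  sombor_glued R (Gk k.+2) = sombor_glued R (Gk k.+1) *+ 2 + sombor_term R 4 4 *+ 6.
Proof.
rewrite GkSS /sombor_glued sombor_arcs_circuit.
rewrite (eq_sombor_arcs R (@glue_deg_circuit1 _ _ _)) (eq_sombor_arcs R (@glue_deg_circuit2 _ _ _)).
rewrite sombor_arcs_K1 !glue_deg_circuit1 glue_deg_circuit2 glue_deg_circuit3.
rewrite !glue_deg_root deg_root_Gk eqxx deg_K1 addr0.
ring.
Qed.

Lemma sombor_glued_G1 : sombor_glued R (Gk 1) = 8 * Num.sqrt 5 + 4 * Num.sqrt 2.
Proof.
rewrite /sombor_glued /sombor_arcs /arc_sum /= !big_ord_recl !big_ord0 /= /glue_deg !deg_triangle /=.
rewrite (@sombor_term_sq R 4 2 2 5 erefl) (@sombor_term_sq R 2 4 2 5 erefl).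
by rewrite (@sombor_term_sq R 2 2 2 2 erefl); ring.
Qed.

Lemma sombor_glued_Gk k :
  sombor_glued R (Gk k.+1) = (2 ^ k)%:R * (8 * Num.sqrt 5 + 28 * Num.sqrt 2) - 24 * Num.sqrt 2.
Proof.
elim: k => [|k IH]; first by rewrite sombor_glued_G1 expn0; ring.
rewrite sombor_glued_GkSS IH (@sombor_term_sq R 4 4 4 2 erefl) expnS natrM.
ring.
Qed.
End GkSombor.

Local Open Scope ring_scope.

Theorem mainTheorem11 (R : rcfType) (k : nat) : (1 <= k)%N ->
  sombor R (Tk k) =
    (36 * (2 ^ (k - 1) - 1) + 6 * 2 ^ (k - 1) + 12)%N%:R * Num.sqrt 2
    + (6 * 2 ^ k)%N%:R * Num.sqrt 5.
Proof.
case: k => // k _; apply: (@pmulrnI _ 2) => //.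
have sG := simple_Gk k.+1.
rewrite (sombor_circuit R sG sG sG) !deg_root_Gk sombor_glued_Gk (@sombor_term_sq R 4 4 4 2 erefl).
rewrite subSS subn0 natrD natrD !natrM natrB ?expn_gt0 // !natrX exprS.
ring.
Qed.
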